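(* Let $N\ge2$ be even. For every $s\in(1,m^*_N]$ there exists $\theta_s\in\mathcal G$ with $\langle M_N(\theta_s)\rangle=s$.
   Context: $\mathcal G=(\pi/4,\pi/2)\cup(\pi/2,3\pi/4)\cup(5\pi/4,3\pi/2)\cup(3\pi/2,7\pi/4)$. For $\bm x\in\{0,1\}^N$ let $|\bm x|=\sum_kx_k$ and $c_{\bm x}=\cos\big[\frac\pi2\big(\frac{N-1}2-|\bm x|\big)\big]$. The MABK value of the strategy with state $(|0\rangle^{\otimes N}+i|1\rangle^{\otimes N})/\sqrt2$ and observables $A^{(k)}_0=\sigma_X$, $A^{(k)}_1=\cos\theta\sigma_X+\sin\theta\sigma_Y$ for all $k$ is $\langle M_N(\theta)\rangle:=2^{(1-N)/2}\sum_{\bm x\in\{0,1\}^N}c_{\bm x}\sin(|\bm x|\theta)$ (since the full correlator of this strategy at input $\bm x$ is $\sin(|\bm x|\theta)$); equivalently $\langle M_N(\theta)\rangle=2^{\frac{N-1}2}\big(\cos^N(\theta/2+\pi/4)\sin(N\theta/2+\pi/4)+\cos^N(\theta/2-\pi/4)\sin(N\theta/2-\pi/4)\big)$. $m^*_N:=\langle M_N(\theta^*_N)\rangle$ with $\theta^*_N=2\pi t_N/(N+1)$, where $t_N=N/4+1/2,\ N/4,\ 3N/4+1/2,\ 3N/4+1$ according as $N\equiv2,4,6,0\pmod 8$. *)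

From Stdlib Require Import Reals Lra Lia List.
Open Scope R_scope.

Fixpoint bitstrings (N : nat) : list (list bool) :=
  match N with
  | O => nil :: nil
  | S n => map (cons false) (bitstrings n) ++ map (cons true) (bitstrings n)
  end.

Definition weight (x : list bool) : nat := count_occ Bool.bool_dec x true.

Definition cx (N : nat) (x : list bool) : R :=
  cos (PI / 2 * ((INR N - 1) / 2 - INR (weight x))).

Definition MABK (N : nat) (theta : R) : R :=
  Rpower 2 ((1 - INR N) / 2) *
  fold_right Rplus 0
    (map (fun x => cx N x * sin (INR (weight x) * theta)) (bitstrings N)).

(* t_N, for N = 2,4,6,0 (mod 8); only used for even N. *)
Definition tN (N : nat) : R :=
  match (N mod 8)%nat with
  | 2%nat => INR N / 4 + 1 / 2
  | 4%nat => INR N / 4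
  | 6%nat => 3 * INR N / 4 + 1 / 2
  | _ => 3 * INR N / 4 + 1
  end.

Definition theta_star (N : nat) : R := 2 * PI * tN N / (INR N + 1).

Definition m_star (N : nat) : R := MABK N (theta_star N).

Definition inG (t : R) : Prop :=
  (PI / 4 < t < PI / 2) \/ (PI / 2 < t < 3 * PI / 4) \/
  (5 * PI / 4 < t < 3 * PI / 2) \/ (3 * PI / 2 < t < 7 * PI / 4).

From Stdlib Require Import Reals Arith Lra Lia List.
Open Scope R_scope.

(* 1. Summing over bit strings by peeling off the first bit gives the closed
      form  sum_x sin(|x| psi + gam) = (2 cos(psi/2))^n sin(n psi/2 + gam).
      Writing c_x sin(|x| t) as a half-sum of two such sines yields, for N = 2m,
        <M_{2m}(t)> = (sqrt 2/2) [ (1 - sin t)^m sin(m t + pi/4)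
                                   + (1 + sin t)^m sin(m t - pi/4) ],
      a continuous function of t (called [M2 m] below).
   2. [M2 m t <= 0] whenever m t lies in [5pi/4, 7pi/4] modulo 2 pi, because
      both sines are then nonpositive.
   3. For each residue of N modulo 8, theta*_N lies strictly inside one piece
      (lo, hi) of G, and the closed piece [lo, hi] also contains a point of
      step 2, where M2 m <= 0 < s.  The intermediate value theorem on the
      piece then attains every s in (1, m*_N].  For the small cases
      N = 2, 4, 8 that point is replaced by an explicit evaluation of M2. *)

Definition sumR (l : list R) : R := fold_right Rplus 0 l.

Lemma sumR_app (l1 l2 : list R) : sumR (l1 ++ l2) = sumR l1 + sumR l2.
Proof. induction l1 as [|a l1 IH]; simpl; [ring | unfold sumR in *; simpl; rewrite IH; ring]. Qed.

Lemma sumR_map_ext {A : Type} (f g : A -> R) (l : list A) :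
  (forall x, f x = g x) -> sumR (map f l) = sumR (map g l).
Proof. intros Hfg; induction l as [|a l IH]; simpl; auto. unfold sumR in *; simpl; rewrite IH, Hfg; auto. Qed.

Lemma sumR_map_half {A : Type} (f g : A -> R) (l : list A) :
  sumR (map (fun x => (f x + g x) / 2) l) = (sumR (map f l) + sumR (map g l)) / 2.
Proof. induction l as [|a l IH]; unfold sumR in *; simpl; [field | rewrite IH; field]. Qed.

Definition sin_weight_sum (n : nat) (psi gam : R) : R :=
  sumR (map (fun x => sin (INR (weight x) * psi + gam)) (bitstrings n)).

(* Closed form: strings starting with 1 shift the phase by psi, and
   sin a + sin (a + psi) = 2 cos(psi/2) sin(a + psi/2). *)
Lemma sin_weight_sum_closed (n : nat) (psi gam : R) :
  sin_weight_sum n psi gam = (2 * cos (psi / 2)) ^ n * sin (INR n * psi / 2 + gam).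
Proof.
  revert gam; induction n as [|n IH]; intros gam.
  - unfold sin_weight_sum, sumR; simpl.
    replace (0 * psi + gam) with gam by ring. replace (0 * psi / 2 + gam) with gam by field. ring.
  - unfold sin_weight_sum; simpl bitstrings. rewrite map_app, sumR_app, !map_map.
    assert (Hone : sumR (map (fun x => sin (INR (weight (true :: x)) * psi + gam)) (bitstrings n))
                   = sin_weight_sum n psi (gam + psi)).
    { apply sumR_map_ext; intros x. change (weight (true :: x)) with (S (weight x)).
      rewrite S_INR. f_equal. ring. }
    change (sumR (map (fun x => sin (INR (weight (false :: x)) * psi + gam)) (bitstrings n)))
      with (sin_weight_sum n psi gam).
    rewrite Hone, !IH, S_INR, <- Rmult_plus_distr_l, form3.
    replace ((INR n * psi / 2 + gam - (INR n * psi / 2 + (gam + psi))) / 2) with (- (psi / 2)) by field.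
    rewrite cos_neg.
    replace ((INR n * psi / 2 + gam + (INR n * psi / 2 + (gam + psi))) / 2)
      with ((INR n + 1) * psi / 2 + gam) by field.
    simpl; ring.
Qed.

Definition M2 (m : nat) (t : R) : R :=
  sqrt 2 / 2 * ((1 - sin t) ^ m * sin (INR m * t + PI / 4)
              + (1 + sin t) ^ m * sin (INR m * t - PI / 4)).

Lemma Rpower_normalisation (m : nat) : Rpower 2 ((1 - INR (2 * m)) / 2) = sqrt 2 / 2 ^ m.
Proof.
  rewrite mult_INR. replace ((1 - INR 2 * INR m) / 2) with (/ 2 + - INR m) by (simpl; field).
  rewrite Rpower_plus, Rpower_sqrt, Rpower_Ropp, Rpower_pow by lra.
  field. apply pow_nonzero. lra.
Qed.

Lemma MABK_even (m : nat) (t : R) : MABK (2 * m) t = M2 m t.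
Proof.
  unfold MABK. set (N := (2 * m)%nat).
  (* c_x sin(|x| t) is the half-sum of two shifted sines. *)
  assert (Hsplit : fold_right Rplus 0 (map (fun x => cx N x * sin (INR (weight x) * t)) (bitstrings N))
     = (sin_weight_sum N (t - PI / 2) (PI * (INR N - 1) / 4)
        + sin_weight_sum N (t + PI / 2) (- (PI * (INR N - 1) / 4))) / 2).
  { unfold sin_weight_sum. rewrite <- sumR_map_half. apply sumR_map_ext. intros x. unfold cx.
    replace (INR (weight x) * (t - PI / 2) + PI * (INR N - 1) / 4)
      with (INR (weight x) * t + PI / 2 * ((INR N - 1) / 2 - INR (weight x))) by field.
    replace (INR (weight x) * (t + PI / 2) + - (PI * (INR N - 1) / 4))
      with (INR (weight x) * t - PI / 2 * ((INR N - 1) / 2 - INR (weight x))) by field.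
    rewrite sin_plus, sin_minus. field. }
  assert (Hsq : forall a, (2 * cos (a / 2)) ^ 2 = 2 * (1 + cos a)).
  { intros a. replace a with (2 * (a / 2)) at 2 by field. rewrite cos_2a_cos. ring. }
  assert (Hc1 : cos (t - PI / 2) = sin t) by (rewrite cos_minus, cos_PI2, sin_PI2; ring).
  assert (Hc2 : cos (t + PI / 2) = - sin t) by (rewrite cos_plus, cos_PI2, sin_PI2; ring).
  rewrite Hsplit, !sin_weight_sum_closed. unfold N. rewrite Rpower_normalisation. unfold M2.
  rewrite !pow_mult, !Hsq, Hc1, Hc2, !Rpow_mult_distr, mult_INR.
  replace (INR 2 * INR m * (t - PI / 2) / 2 + PI * (INR 2 * INR m - 1) / 4)
    with (INR m * t - PI / 4) by (simpl; field).
  replace (INR 2 * INR m * (t + PI / 2) / 2 + - (PI * (INR 2 * INR m - 1) / 4))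
    with (INR m * t + PI / 4) by (simpl; field).
  replace (1 + - sin t) with (1 - sin t) by ring.
  field. apply pow_nonzero. lra.
Qed.

Lemma M2_continuous (m : nat) : continuity (M2 m).
Proof. unfold M2. reg. Qed.

(* If m t = b (mod 2 pi) with b in [5pi/4, 7pi/4], both sines in M2 are <= 0. *)
Lemma M2_nonpos (m j : nat) (t b : R) :
  INR m * t = b + 2 * INR j * PI -> 5 * PI / 4 <= b <= 7 * PI / 4 -> M2 m t <= 0.
Proof.
  intros Hmt Hb. unfold M2. rewrite Hmt.
  replace (b + 2 * INR j * PI + PI / 4) with ((b + PI / 4) + 2 * INR j * PI) by ring.
  replace (b + 2 * INR j * PI - PI / 4) with ((b + - (PI / 4)) + 2 * INR j * PI) by ring.
  rewrite !sin_period.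
  pose proof PI_RGT_0. pose proof (SIN_bound t). pose proof (sqrt_pos 2).
  assert (Hs1 : sin (b + PI / 4) <= 0) by (apply sin_le_0; lra).
  assert (Hs2 : sin (b + - (PI / 4)) <= 0) by (apply sin_le_0; lra).
  assert (Hp1 : 0 <= (1 - sin t) ^ m) by (apply pow_le; lra).
  assert (Hp2 : 0 <= (1 + sin t) ^ m) by (apply pow_le; lra).
  assert (0 <= (1 - sin t) ^ m * - sin (b + PI / 4) + (1 + sin t) ^ m * - sin (b + - (PI / 4))).
  { apply Rplus_le_le_0_compat; apply Rmult_le_pos; lra. }
  nra.
Qed.

Lemma ivt_between (f : R -> R) (a b s : R) :
  continuity f -> f a < s <= f b ->
  exists z, Rmin a b <= z <= Rmax a b /\ z <> a /\ f z = s.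
Proof.
  intros Cf Hs.
  assert (Cfs : continuity (fun t => f t - s)).
  { apply continuity_minus; [exact Cf | apply continuity_const; intros ??; reflexivity]. }
  assert (Hsign : (f a - s) * (f b - s) <= 0) by (assert (0 <= f b - s) by lra; nra).
  destruct (Rle_dec a b) as [Hab | Hab].
  - destruct (IVT_cor _ a b Cfs Hab Hsign) as [z [Hz Ez]].
    exists z. rewrite Rmin_left, Rmax_right by lra.
    repeat split; try lra. intros ->. lra.
  - destruct (IVT_cor _ b a Cfs (Rlt_le _ _ (Rnot_le_lt _ _ Hab))) as [z [Hz Ez]].
    { rewrite Rmult_comm. exact Hsign. }
    exists z. rewrite Rmin_right, Rmax_left by lra.
    repeat split; try lra. intros ->. lra.
Qed.

(* The same on a closed interval [lo, hi] containing a and b, with the value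
   attained in the open interval: the crossing point is not a, and it can only
   be b if f b = s, in which case b is assumed interior. *)
Lemma ivt_open (f : R -> R) (lo hi a b s : R) :
  continuity f -> lo <= a <= hi -> lo <= b <= hi -> f a < s <= f b ->
  (f b = s -> lo < b < hi) -> exists z, lo < z < hi /\ f z = s.
Proof.
  intros Cf Ha Hb Hs Hend.
  destruct (ivt_between f a b s Cf Hs) as [z [Hz [Hza Ez]]].
  exists z. split; [| exact Ez].
  assert (Hzb : z <> b \/ lo < b < hi) by (destruct (Req_dec z b) as [-> |]; auto).
  unfold Rmin, Rmax in Hz; destruct (Rle_dec a b); lra.
Qed.

Lemma M2_attains_on_piece (m : nat) (lo hi ta tb s : R) :
  (forall t, lo < t < hi -> inG t) ->
  lo <= ta <= hi -> lo <= tb <= hi -> M2 m ta < s <= M2 m tb ->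
  (M2 m tb = s -> lo < tb < hi) -> exists z, inG z /\ M2 m z = s.
Proof.
  intros Hpiece Hta Htb Hs Hend.
  destruct (ivt_open (M2 m) lo hi ta tb s (M2_continuous m) Hta Htb Hs Hend) as [z [Hz Ez]].
  exists z. auto.
Qed.

Lemma mod8_small (r k : nat) : (r < 8)%nat -> ((r + k * 8) mod 8 = r)%nat.
Proof. intros. rewrite Nat.Div0.mod_add. apply Nat.mod_small; auto. Qed.

(* N = 8k + 2, k >= 1: theta* = pi (4k+2)/(8k+3) in (pi/2, 3pi/4), and
   M2 <= 0 at pi (4k+3)/(8k+2), where m t = 3pi/2 + 2k pi. *)
Lemma attains_N_2mod8 (k : nat) (s : R) : (1 <= k)%nat ->
  1 < s <= M2 (4 * k + 1) (theta_star (2 * (4 * k + 1))) ->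
  exists z, inG z /\ M2 (4 * k + 1) z = s.
Proof.
  intros Hk Hs.
  assert (HK : 1 <= INR k) by (apply (le_INR 1); lia).
  assert (Em : INR (4 * k + 1) = 4 * INR k + 1) by (rewrite plus_INR, mult_INR; simpl; ring).
  assert (EN : INR (2 * (4 * k + 1)) = 8 * INR k + 2) by (rewrite mult_INR, Em; simpl; ring).
  assert (M8 : ((2 * (4 * k + 1)) mod 8 = 2)%nat).
  { replace (2 * (4 * k + 1))%nat with (2 + k * 8)%nat by lia. apply mod8_small; lia. }
  set (K := INR k) in *. pose proof PI_RGT_0.
  set (qb := (4 * K + 2) / (8 * K + 3)).
  assert (Eb : theta_star (2 * (4 * k + 1)) = PI * qb).
  { unfold theta_star, tN. rewrite M8, EN. unfold qb. field. lra. }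
  assert (Hqb : qb * (8 * K + 3) = 4 * K + 2) by (unfold qb; field; lra).
  set (qa := (4 * K + 3) / (8 * K + 2)).
  assert (Hqa : qa * (8 * K + 2) = 4 * K + 3) by (unfold qa; field; lra).
  assert (Ga : M2 (4 * k + 1) (PI * qa) <= 0).
  { apply (M2_nonpos _ k _ (3 * PI / 2)); [| lra]. rewrite Em. fold K. unfold qa. field. lra. }
  rewrite Eb in Hs.
  assert (1 / 2 <= qa <= 3 / 4) by nra. assert (1 / 2 < qb < 3 / 4) by nra.
  apply (M2_attains_on_piece _ (PI / 2) (3 * PI / 4) (PI * qa) (PI * qb));
    [intros; unfold inG; lra | nra | nra | lra | intros; nra].
Qed.

(* N = 8k + 4, k >= 1: theta* = pi (4k+2)/(8k+5) in (pi/4, pi/2), and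
   M2 <= 0 at pi (4k-1)/(8k+4), where m t = 3pi/2 + 2(k-1) pi. *)
Lemma attains_N_4mod8 (k : nat) (s : R) : (1 <= k)%nat ->
  1 < s <= M2 (4 * k + 2) (theta_star (2 * (4 * k + 2))) ->
  exists z, inG z /\ M2 (4 * k + 2) z = s.
Proof.
  intros Hk Hs. destruct k as [|k]; [lia|].
  assert (HK : 0 <= INR k) by apply pos_INR.
  assert (Em : INR (4 * S k + 2) = 4 * INR k + 6) by (rewrite plus_INR, mult_INR, (S_INR k); simpl; ring).
  assert (EN : INR (2 * (4 * S k + 2)) = 8 * INR k + 12) by (rewrite mult_INR, Em; simpl; ring).
  assert (M8 : ((2 * (4 * S k + 2)) mod 8 = 4)%nat).
  { replace (2 * (4 * S k + 2))%nat with (4 + S k * 8)%nat by lia. apply mod8_small; lia. }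
  set (K := INR k) in *. pose proof PI_RGT_0.
  set (qb := (4 * K + 6) / (8 * K + 13)).
  assert (Eb : theta_star (2 * (4 * S k + 2)) = PI * qb).
  { unfold theta_star, tN. rewrite M8, EN. unfold qb. field. lra. }
  assert (Hqb : qb * (8 * K + 13) = 4 * K + 6) by (unfold qb; field; lra).
  set (qa := (4 * K + 3) / (8 * K + 12)).
  assert (Hqa : qa * (8 * K + 12) = 4 * K + 3) by (unfold qa; field; lra).
  assert (Ga : M2 (4 * S k + 2) (PI * qa) <= 0).
  { apply (M2_nonpos _ k _ (3 * PI / 2)); [| lra]. rewrite Em. fold K. unfold qa. field. lra. }
  rewrite Eb in Hs.
  assert (1 / 4 <= qa <= 1 / 2) by nra. assert (1 / 4 < qb < 1 / 2) by nra.
  apply (M2_attains_on_piece _ (PI / 4) (PI / 2) (PI * qa) (PI * qb));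
    [intros; unfold inG; lra | nra | nra | lra | intros; nra].
Qed.

(* N = 8k + 6: theta* = pi (12k+10)/(8k+7) in (5pi/4, 3pi/2), and
   M2 <= 0 at pi (24k+15)/(16k+12), where m t = 7pi/4 + 2(3k+1) pi. *)
Lemma attains_N_6mod8 (k : nat) (s : R) :
  1 < s <= M2 (4 * k + 3) (theta_star (2 * (4 * k + 3))) ->
  exists z, inG z /\ M2 (4 * k + 3) z = s.
Proof.
  intros Hs.
  assert (HK : 0 <= INR k) by apply pos_INR.
  assert (Em : INR (4 * k + 3) = 4 * INR k + 3) by (rewrite plus_INR, mult_INR; simpl; ring).
  assert (EN : INR (2 * (4 * k + 3)) = 8 * INR k + 6) by (rewrite mult_INR, Em; simpl; ring).
  assert (M8 : ((2 * (4 * k + 3)) mod 8 = 6)%nat).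
  { replace (2 * (4 * k + 3))%nat with (6 + k * 8)%nat by lia. apply mod8_small; lia. }
  assert (Ej : INR (3 * k + 1) = 3 * INR k + 1) by (rewrite plus_INR, mult_INR; simpl; ring).
  set (K := INR k) in *. pose proof PI_RGT_0.
  set (qb := (12 * K + 10) / (8 * K + 7)).
  assert (Eb : theta_star (2 * (4 * k + 3)) = PI * qb).
  { unfold theta_star, tN. rewrite M8, EN. unfold qb. field. lra. }
  assert (Hqb : qb * (8 * K + 7) = 12 * K + 10) by (unfold qb; field; lra).
  set (qa := (24 * K + 15) / (16 * K + 12)).
  assert (Hqa : qa * (16 * K + 12) = 24 * K + 15) by (unfold qa; field; lra).
  assert (Ga : M2 (4 * k + 3) (PI * qa) <= 0).
  { apply (M2_nonpos _ (3 * k + 1) _ (7 * PI / 4)); [| lra]. rewrite Em, Ej. unfold qa. field. lra. }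
  rewrite Eb in Hs.
  assert (5 / 4 <= qa <= 3 / 2) by nra. assert (5 / 4 < qb < 3 / 2) by nra.
  apply (M2_attains_on_piece _ (5 * PI / 4) (3 * PI / 2) (PI * qa) (PI * qb));
    [intros; unfold inG; lra | nra | nra | lra | intros; nra].
Qed.

(* N = 8k, k >= 2: theta* = pi (12k+2)/(8k+1) in (3pi/2, 7pi/4), and
   M2 <= 0 at pi (12k+3)/(8k), where m t = 3pi/2 + 2(3k) pi. *)
Lemma attains_N_0mod8 (k : nat) (s : R) : (2 <= k)%nat ->
  1 < s <= M2 (4 * k) (theta_star (2 * (4 * k))) ->
  exists z, inG z /\ M2 (4 * k) z = s.
Proof.
  intros Hk Hs.
  assert (HK : 2 <= INR k) by (apply (le_INR 2); lia).
  assert (Em : INR (4 * k) = 4 * INR k) by (rewrite mult_INR; simpl; ring).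
  assert (EN : INR (2 * (4 * k)) = 8 * INR k) by (rewrite mult_INR, Em; simpl; ring).
  assert (M8 : ((2 * (4 * k)) mod 8 = 0)%nat).
  { replace (2 * (4 * k))%nat with (0 + k * 8)%nat by lia. apply mod8_small; lia. }
  assert (Ej : INR (3 * k) = 3 * INR k) by (rewrite mult_INR; simpl; ring).
  set (K := INR k) in *. pose proof PI_RGT_0.
  set (qb := (12 * K + 2) / (8 * K + 1)).
  assert (Eb : theta_star (2 * (4 * k)) = PI * qb).
  { unfold theta_star, tN. rewrite M8, EN. unfold qb. field. lra. }
  assert (Hqb : qb * (8 * K + 1) = 12 * K + 2) by (unfold qb; field; lra).
  set (qa := (12 * K + 3) / (8 * K)).
  assert (Hqa : qa * (8 * K) = 12 * K + 3) by (unfold qa; field; lra).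
  assert (Ga : M2 (4 * k) (PI * qa) <= 0).
  { apply (M2_nonpos _ (3 * k) _ (3 * PI / 2)); [| lra]. rewrite Em, Ej. unfold qa. field. lra. }
  rewrite Eb in Hs.
  assert (3 / 2 <= qa <= 7 / 4) by nra. assert (3 / 2 < qb < 7 / 4) by nra.
  apply (M2_attains_on_piece _ (3 * PI / 2) (7 * PI / 4) (PI * qa) (PI * qb));
    [intros; unfold inG; lra | nra | nra | lra | intros; nra].
Qed.

Lemma sqrt2_sq : sqrt 2 * sqrt 2 = 2.
Proof. apply sqrt_sqrt; lra. Qed.

Lemma sqrt2_pos : 0 < sqrt 2.
Proof. apply sqrt_lt_R0; lra. Qed.

(* N = 2: theta* = 2pi/3, and M2 1 (pi/2) = 1 < s. *)
Lemma attains_N2 (s : R) :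
  1 < s <= M2 1 (theta_star (2 * 1)) -> exists z, inG z /\ M2 1 z = s.
Proof.
  intros Hs. pose proof PI_RGT_0. pose proof sqrt2_sq. pose proof sqrt2_pos.
  assert (Eb : theta_star (2 * 1) = 2 * PI / 3) by (unfold theta_star, tN; simpl; field).
  assert (Ga : M2 1 (PI / 2) = 1).
  { unfold M2. rewrite sin_PI2. replace (INR 1 * (PI / 2) - PI / 4) with (PI / 4) by (simpl; field).
    rewrite sin_PI4. simpl. field. lra. }
  rewrite Eb in Hs.
  apply (M2_attains_on_piece _ (PI / 2) (3 * PI / 4) (PI / 2) (2 * PI / 3));
    [intros; unfold inG | | | | intros]; lra.
Qed.

(* N = 4: theta* = 2pi/5 in (pi/4, pi/2); M2 2 equals 3/2 at pi/4, 2 at pi/2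
   and is <= 0 at 3pi/4.  Values s >= 2 are attained in (pi/4, pi/2), values
   s < 2 in (pi/2, 3pi/4). *)
Lemma attains_N4 (s : R) :
  1 < s <= M2 2 (theta_star (2 * 2)) -> exists z, inG z /\ M2 2 z = s.
Proof.
  intros Hs. pose proof PI_RGT_0. pose proof sqrt2_sq. pose proof sqrt2_pos.
  assert (Eb : theta_star (2 * 2) = 2 * PI / 5) by (unfold theta_star, tN; simpl; field).
  assert (G1 : M2 2 (PI / 2) = 2).
  { unfold M2. rewrite sin_PI2.
    replace (INR 2 * (PI / 2) - PI / 4) with (PI - PI / 4) by (simpl; field).
    rewrite sin_PI_x, sin_PI4. simpl. field. lra. }
  assert (G2 : M2 2 (PI / 4) = 3 / 2).
  { unfold M2. replace (INR 2 * (PI / 4) - PI / 4) with (PI / 4) by (simpl; field).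
    replace (INR 2 * (PI / 4) + PI / 4) with (PI - PI / 4) by (simpl; field).
    rewrite sin_PI_x, sin_PI4. simpl. field_simplify; [| lra].
    replace (sqrt 2 ^ 4) with 4 by (simpl; nra). replace (sqrt 2 ^ 2) with 2 by (simpl; nra).
    field. }
  assert (G3 : M2 2 (3 * PI / 4) <= 0).
  { apply (M2_nonpos _ 0 _ (3 * PI / 2)); [simpl; field | lra]. }
  rewrite Eb in Hs.
  destruct (Rlt_dec s 2) as [Hs2 | Hs2].
  - apply (M2_attains_on_piece _ (PI / 2) (3 * PI / 4) (3 * PI / 4) (PI / 2));
      [intros; unfold inG | | | | intros]; lra.
  - apply (M2_attains_on_piece _ (PI / 4) (PI / 2) (PI / 4) (2 * PI / 5));
      [intros; unfold inG | | | | intros]; lra.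
Qed.

(* N = 8: theta* = 14pi/9 in (3pi/2, 7pi/4), and at 7pi/4, with a = 1/sqrt 2,
   M2 4 = (sqrt 2/2) a ((1-a)^4 - (1+a)^4) <= 0. *)
Lemma attains_N8 (s : R) :
  1 < s <= M2 4 (theta_star (2 * 4)) -> exists z, inG z /\ M2 4 z = s.
Proof.
  intros Hs. pose proof PI_RGT_0. pose proof sqrt2_sq. pose proof sqrt2_pos.
  assert (Eb : theta_star (2 * 4) = 14 * PI / 9) by (unfold theta_star, tN; simpl; field).
  assert (S1 : sin (7 * PI / 4) = - (1 / sqrt 2)).
  { replace (7 * PI / 4) with (- (PI / 4) + 2 * INR 1 * PI) by (simpl; field).
    rewrite sin_period, sin_neg, sin_PI4. ring. }
  assert (S2 : sin (INR 4 * (7 * PI / 4) + PI / 4) = - (1 / sqrt 2)).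
  { replace (INR 4 * (7 * PI / 4) + PI / 4) with ((PI / 4 + PI) + 2 * INR 3 * PI) by (simpl; field).
    rewrite sin_period, neg_sin, sin_PI4. ring. }
  assert (S3 : sin (INR 4 * (7 * PI / 4) - PI / 4) = 1 / sqrt 2).
  { replace (INR 4 * (7 * PI / 4) - PI / 4) with ((PI - PI / 4) + 2 * INR 3 * PI) by (simpl; field).
    rewrite sin_period, sin_PI_x, sin_PI4. ring. }
  assert (Ga : M2 4 (7 * PI / 4) <= 0).
  { unfold M2. rewrite S1, S2, S3. set (a := 1 / sqrt 2).
    assert (Ha : 0 < a < 1).
    { unfold a. split; [apply Rdiv_lt_0_compat; lra |].
      apply (Rmult_lt_reg_r (sqrt 2)); auto. field_simplify; nra. }
    assert ((1 - a) ^ 4 <= (1 + a) ^ 4) by (apply pow_incr; lra).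
    replace (1 - - a) with (1 + a) by ring. replace (1 + - a) with (1 - a) by ring.
    assert (0 <= a * ((1 + a) ^ 4 - (1 - a) ^ 4)) by (apply Rmult_le_pos; lra).
    nra. }
  rewrite Eb in Hs.
  apply (M2_attains_on_piece _ (3 * PI / 2) (7 * PI / 4) (7 * PI / 4) (14 * PI / 9));
    [intros; unfold inG | | | | intros]; lra.
Qed.

Theorem proposition4 (N : nat) (HN : (2 <= N)%nat) (Heven : Nat.Even N) :
  forall s : R, 1 < s <= m_star N ->
  exists theta_s : R, inG theta_s /\ MABK N theta_s = s.
Proof.
  intros s Hs. destruct Heven as [m ->].
  unfold m_star in Hs. rewrite MABK_even in Hs.
  enough (Hz : exists z, inG z /\ M2 m z = s).
  { destruct Hz as [z [Hz Ez]]. exists z. rewrite MABK_even. auto. }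
  assert (Hdiv : exists k r, m = (4 * k + r)%nat /\ (r < 4)%nat)
    by (exists (m / 4)%nat, (m mod 4)%nat; split; [apply Nat.div_mod | apply Nat.mod_upper_bound]; lia).
  destruct Hdiv as (k & r & -> & Hr).
  destruct r as [|[|[|[|r]]]]; try lia.
  - rewrite Nat.add_0_r in *. destruct k as [|[|k']]; try lia.
    + exact (attains_N8 s Hs).
    + apply attains_N_0mod8; [lia | exact Hs].
  - destruct k as [|k'].
    + exact (attains_N2 s Hs).
    + apply attains_N_2mod8; [lia | exact Hs].
  - destruct k as [|k'].
    + exact (attains_N4 s Hs).
    + apply attains_N_4mod8; [lia | exact Hs].
  - exact (attains_N_6mod8 k s Hs).
Qed.
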